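(* Let $\Pi=\{\Pi_\theta\}$ be a partition of a set of paths into pairwise disjoint cells and let $\Theta=\{\theta_0,\dots,\theta_{M-1}\}$ be a set of filling classes $\theta_l=(Z_{\theta_l},\Pi_{\theta_l})$ for cells of $\Pi$, totally ordered by some order. Let $Z_\Theta=\bigcup_l Z_{\theta_l}$, where each PGT $\gamma$ has duration $E_\gamma>0$, minimum separation $t^{\mathrm{minsep}}_\gamma\ge0$ and positive integer minimal allocation $\mathcal{M}_\gamma$. Then for every $t_0$ there exists a valid schedule containing exactly $\mathcal{M}_\gamma$ PGAs of every $\gamma\in Z_\Theta$, all of whose PGAs lie within $[t_0,\,t_0+\tilde{\mathcal{R}}(Z_\Theta)]$, where $$\tilde{\mathcal{R}}(Z_\Theta)=\sum_{\theta_l\in\Theta}R(Z_{\theta_l}).$$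
   Context: A filling class is $\phi=(Z_\phi,\Pi_\phi)$ where $\Pi_\phi$ is a cell of the path partition and $Z_\phi$ is a set of PGTs $\gamma$ with paths $\pi_\gamma\in\Pi_\phi$. For a set of PGTs $Z_\phi=\{\gamma_0,\dots,\gamma_{M-1}\}$ indexed so that $\mathcal{M}_{\gamma_0}\le\dots\le\mathcal{M}_{\gamma_{M-1}}$, with $E_x=E_{\gamma_x}$, $\tau_x=t^{\mathrm{minsep}}_{\gamma_x}$: $n_0=\mathcal{M}_{\gamma_0}-1$, $n_x=\mathcal{M}_{\gamma_x}-\mathcal{M}_{\gamma_{x-1}}$ ($x\ge1$), $c_x=\max(\max_{y\ge x}(E_y+\tau_y),\sum_{y=x}^{M-1}E_y)$, and $R(Z_\phi)=\sum_{x=0}^{M-1}(n_xc_x+E_x)$ ($R(\emptyset)=0$). A PGA of $\gamma$ is a time interval $[s,s+E_\gamma)$ assigned to $\gamma$; a schedule is a finite set of PGAs. A resource conflict occurs if there are PGAs $[s,e)$ of $\gamma$ and $[s',e')$ of $\gamma'$ (distinct PGAs) with $\xi(\pi_\gamma)\cap\xi(\pi_{\gamma'})\ne\emptyset$ and $s\le s'<e$, where $\xi(\pi)$ is the set of vertices on path $\pi$. A minsep violation occurs if two time-consecutive PGAs $[s,e)$, $[s'',e'')$ of the same PGT $\gamma$ satisfy $s''-e<t^{\mathrm{minsep}}_\gamma$. A schedule is valid if no resource conflict and no minsep violation occurs. *)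

From HB Require Import structures.
From mathcomp Require Import all_boot all_order all_algebra.
From mathcomp Require Import finmap.
From mathcomp Require Import reals.
Set Implicit Arguments. Unset Strict Implicit. Unset Printing Implicit Defensive.
Import Order.TTheory GRing.Theory Num.Theory.
Local Open Scope ring_scope.

Section PGT.
Variables (R : realType) (G : choiceType).
Variables (E tau : G -> R) (Mall : G -> nat).

(* c for the suffix [g_x; ...; g_{M-1}] *)
Definition cval (s : seq G) : R :=
  Num.max (\big[Num.max/0]_(g <- s) (E g + tau g)) (\sum_(g <- s) E g).

(* sum over x of n_x c_x + E_x, where prev is M_{gamma_{x-1}} (1 initially,
   so that n_0 = M_{gamma_0} - 1) *)
Fixpoint Raux (prev : nat) (s : seq G) : R :=
  match s with
  | [::] => 0
  | g :: s' => ((Mall g - prev)%N%:R * cval s + E g) + Raux (Mall g) s'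
  end.

Definition Rfun (Z : {fset G}) : R :=
  Raux 1 (sort (fun a b => (Mall a <= Mall b)%N) (enum_fset Z)).

(* A PGA is a pair (gamma, s) denoting the interval [s, s + E gamma);
   a schedule is a finite set of PGAs, represented by a duplicate-free list. *)
Definition PGA := (G * R)%type.

Variables (P V : Type) (path : G -> P) (xi : P -> V -> Prop).

Definition resource_conflict (S : seq PGA) : Prop :=
  exists a b, [/\ a \in S, b \in S, a <> b,
    (exists v, xi (path a.1) v /\ xi (path b.1) v) &
    a.2 <= b.2 < a.2 + E a.1].

Definition time_consecutive (S : seq PGA) (a b : PGA) : Prop :=
  [/\ a \in S, b \in S, a.1 = b.1, a.2 < b.2 &
    ~ exists c, [/\ c \in S, c.1 = a.1 & a.2 < c.2 < b.2]].

Definition minsep_violation (S : seq PGA) : Prop :=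
  exists a b, time_consecutive S a b /\ b.2 - (a.2 + E a.1) < tau a.1.

Definition valid_schedule (S : seq PGA) : Prop :=
  uniq S /\ ~ resource_conflict S /\ ~ minsep_violation S.

End PGT.

(* The filling classes are scheduled one after the other, each in its own time
   window, and no two PGAs of the schedule ever overlap in time; this excludes
   resource conflicts whatever the paths, so the cell partition only serves to
   make the classes pairwise disjoint.  For a class sorted by allocation as
   g_0, ..., g_(M-1), the window is a sequence of blocks: n_x blocks of length
   c_x holding one PGA of each of g_x, ..., g_(M-1), then one block of length
   E_0 + ... + E_(M-1) holding one PGA of every g_y.  The PGAs of a PGT sit at
   the same offset in every block, so two consecutive ones are at least
   c_x >= E_g + tau_g apart; g_x occurs in n_0 + ... + n_x + 1 = M_(g_x)
   blocks, and the window has length R(Z). *)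

From HB Require Import structures.
From mathcomp Require Import all_boot all_order all_algebra.
From mathcomp Require Import finmap.
From mathcomp Require Import reals.
From mathcomp Require Import lra zify.
Set Implicit Arguments. Unset Strict Implicit. Unset Printing Implicit Defensive.
Import Order.TTheory GRing.Theory Num.Theory.
Local Open Scope ring_scope.

Section Blocks.
Variables (R : realDomainType) (G : eqType) (E tau : G -> R).

Record block := Block { members : seq G; span : R; offset : G -> R }.

Fixpoint lay (t : R) (bs : seq block) : seq (G * R) :=
  if bs is b :: bs' then
    [seq (g, t + offset b g) | g <- members b] ++ lay (t + span b) bs'
  else [::].

Definition total_span (bs : seq block) : R := \sum_(b <- bs) span b.

Definition block_ok (b : block) : Prop :=
  [/\ uniq (members b), 0 <= span b,
      forall g, g \in members b ->
        [/\ 0 < E g, 0 <= offset b g & offset b g + E g <= span b] &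
      forall g h, g \in members b -> h \in members b -> g != h ->
        offset b g + E g <= offset b h \/ offset b h + E h <= offset b g].

(* A PGT recurring in a later block keeps its offset, so its two PGAs start at
   least [span b] apart; this is what turns [E g + tau g <= span b] into the
   minimum separation. *)
Definition compatible (b b' : block) : Prop :=
  forall g, g \in members b -> g \in members b' ->
    offset b g = offset b' g /\ E g + tau g <= span b.

Fixpoint blocks_ok (bs : seq block) : Prop :=
  if bs is b :: bs' then [/\ block_ok b, List.Forall (compatible b) bs' & blocks_ok bs']
  else True.

Lemma blocks_ok_In bs b : blocks_ok bs -> List.In b bs -> block_ok b.
Proof. by elim: bs => [|b' bs IH] //= [? _ ?] [<-|/IH]; auto. Qed.

Lemma blocks_ok_cat bs bs' : blocks_ok bs -> blocks_ok bs' ->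
  (forall b b', List.In b bs -> List.In b' bs' -> compatible b b') ->
  blocks_ok (bs ++ bs').
Proof.
elim: bs => [|b bs IH] //= [ok_b compat_b ok_bs] ok_bs' compat; split => //.
- apply/List.Forall_app; split => //; apply/List.Forall_forall => b' b'_in.
  by apply: compat => //; left.
- by apply: IH => // c c' c_in c'_in; apply: compat => //; right.
Qed.

Lemma blocks_ok_common_offset bs b o :
  (forall c, List.In c (bs ++ [:: b]) -> block_ok c /\ offset c = o) ->
  (forall c, List.In c bs -> forall g, g \in members c -> E g + tau g <= span c) ->
  blocks_ok (bs ++ [:: b]).
Proof.
elim: bs => [|c bs IH] ok_bs spacious /=.
  by split; [have [] := ok_bs b (or_introl erefl) | constructor | ].
split.
- by have [] := ok_bs c (or_introl erefl).
- apply/List.Forall_forall => c' c'_in g g_c g_c'; split.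
  + by rewrite (proj2 (ok_bs c (or_introl erefl))) (proj2 (ok_bs c' (or_intror c'_in))).
  + by apply: spacious => //; left.
- by apply: IH => c' c'_in; [apply: ok_bs | apply: spacious]; right.
Qed.

Lemma total_span_ge0 bs : blocks_ok bs -> 0 <= total_span bs.
Proof.
elim: bs => [|b bs IH] /=; first by rewrite /total_span big_nil.
by case=> [[_ span_ge0 _ _] _ /IH]; rewrite /total_span big_cons; lra.
Qed.

Lemma mem_lay t bs a : blocks_ok bs -> a \in lay t bs ->
  exists b, [/\ List.In b bs, a.1 \in members b, t + offset b a.1 <= a.2 &
                a.2 + E a.1 <= t + total_span bs].
Proof.
rewrite /total_span; elim: bs t => [|b bs IH] t //=.
case=> [[_ span_ge0 fits _] _ ok_bs]; rewrite mem_cat big_cons.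
case/orP => [/mapP [g g_b ->] | a_in].
- exists b; split => //=; first by left.
  have [_ _ ?] := fits g g_b; have := total_span_ge0 ok_bs; rewrite /total_span; lra.
- have [b' [b'_in ? ? ?]] := IH (t + span b) ok_bs a_in.
  by exists b'; split; [right | | lra | lra].
Qed.

Lemma lay_start_ge t bs a : blocks_ok bs -> a \in lay t bs -> t <= a.2.
Proof.
move=> ok_bs /(mem_lay ok_bs) [b [b_in g_b ? _]].
have [_ _ fits _] := blocks_ok_In ok_bs b_in; have [_ ? _] := fits _ g_b; lra.
Qed.

Lemma lay_duration_gt0 t bs a : blocks_ok bs -> a \in lay t bs -> 0 < E a.1.
Proof.
move=> ok_bs /(mem_lay ok_bs) [b [b_in g_b _ _]].
by have [_ _ fits _] := blocks_ok_In ok_bs b_in; have [] := fits _ g_b.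
Qed.

Lemma lay_disjoint t bs a a' : blocks_ok bs ->
  a \in lay t bs -> a' \in lay t bs -> a != a' ->
  a.2 + E a.1 <= a'.2 \/ a'.2 + E a'.1 <= a.2.
Proof.
elim: bs t a a' => [|b bs IH] t a a' //=.
case=> [[_ _ fits sep] _ ok_bs]; rewrite !mem_cat.
case/orP => [/mapP [g g_b ->] | a_in]; case/orP => [/mapP [h h_b ->] | a'_in] neq.
- have g_h : g != h by apply: contra neq => /eqP ->.
  by have /= := sep g h g_b h_b g_h; lra.
- by have := lay_start_ge ok_bs a'_in; have [_ _ ?] := fits g g_b; rewrite /=; lra.
- by have := lay_start_ge ok_bs a_in; have [_ _ ?] := fits h h_b; rewrite /=; lra.
- exact: IH a_in a'_in neq.
Qed.

Lemma lay_minsep t bs a a' : blocks_ok bs ->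
  a \in lay t bs -> a' \in lay t bs -> a.1 = a'.1 -> a.2 < a'.2 ->
  a.2 + E a.1 + tau a.1 <= a'.2.
Proof.
elim: bs t a a' => [|b bs IH] t a a' //=.
case=> [[_ _ fits _] compat ok_bs]; rewrite !mem_cat.
case/orP => [/mapP [g g_b ->] | a_in]; case/orP => [/mapP [h h_b ->] | a'_in] /= same lt.
- by move: lt; rewrite same ltxx.
- have [b' [b'_in g_b' start _]] := mem_lay ok_bs a'_in.
  have /List.Forall_forall/(_ b' b'_in) compat_b' := compat.
  rewrite -same in g_b' start; have [same_offset ?] := compat_b' g g_b g_b'; lra.
- by have := lay_start_ge ok_bs a_in; have [? _ ?] := fits h h_b; lra.
- exact: IH a_in a'_in same lt.
Qed.

Lemma lay_uniq t bs : blocks_ok bs -> uniq (lay t bs).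
Proof.
elim: bs t => [|b bs IH] t //=.
case=> [[uniq_b _ fits _] _ ok_bs]; rewrite cat_uniq IH // andbT.
rewrite map_inj_uniq ?uniq_b; last by move=> ? ? [].
apply/hasPn => a a_in; apply/mapP => -[g g_b a_eq].
by have := lay_start_ge ok_bs a_in; rewrite a_eq /=; have [? _ ?] := fits g g_b; lra.
Qed.

Lemma count_lay t bs g : blocks_ok bs ->
  count (fun a => a.1 == g) (lay t bs) = count (fun b => g \in members b) bs.
Proof.
elim: bs t => [|b bs IH] t //=.
case=> [[uniq_b _ _ _] _ ok_bs]; rewrite count_cat IH // count_map.
by rewrite -(count_uniq_mem g uniq_b); congr (_ + _)%N; apply: eq_count.
Qed.

End Blocks.

Lemma valid_lay (R : realType) (G : choiceType) (E tau : G -> R)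
    (P V : Type) (path : G -> P) (xi : P -> V -> Prop) t bs :
  blocks_ok E tau bs -> valid_schedule E tau path xi (lay t bs).
Proof.
move=> ok_bs; split; first by rewrite (lay_uniq t ok_bs).
split.
- move=> [a [a' [a_in a'_in /eqP neq _ /andP [lo hi]]]].
  have := lay_duration_gt0 ok_bs a'_in.
  by have := lay_disjoint ok_bs a_in a'_in neq; lra.
- move=> [a [a' [[a_in a'_in same lt _] short]]].
  by have := lay_minsep ok_bs a_in a'_in same lt; lra.
Qed.

Section FillingClass.
Variables (R : realType) (G : choiceType) (E tau : G -> R) (Mall : G -> nat).

Definition durations (s : seq G) : R := \sum_(g <- s) E g.

(* Packing the PGAs back to back in reverse list order makes these offsets
   serve every suffix at once: [drop k s] occupies exactly
   [[0, durations (drop k s))]. *)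
Definition rear_offset (s : seq G) (g : G) : R := durations (drop (index g s).+1 s).

Lemma durations_ge0 s : {in s, forall g, 0 < E g} -> 0 <= durations s.
Proof. by move=> E_gt0; rewrite /durations big_seq sumr_ge0 // => g /E_gt0/ltW. Qed.

Lemma durations_drop_le s i j : {in s, forall g, 0 < E g} -> (i <= j)%N ->
  durations (drop j s) <= durations (drop i s).
Proof.
move=> E_gt0 le_ij; rewrite -(subnK le_ij) -drop_drop.
set s' := drop i s; rewrite -[in leRHS](cat_take_drop (j - i) s') /durations big_cat /=.
by rewrite lerDr durations_ge0 // => g /mem_take/mem_drop/E_gt0.
Qed.

Lemma rear_offset_drop s k g : uniq s -> g \in drop k s ->
  rear_offset s g = rear_offset (drop k s) g.
Proof.
elim: s k => [|x s IH] [|k] //= /andP [x_notin uniq_s] g_in.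
have x_neq_g : (x == g) = false.
  by apply: contraNF x_notin => /eqP ->; apply: mem_drop g_in.
by rewrite -IH // /rear_offset /= x_neq_g.
Qed.

Lemma rear_offsetDE s g : g \in s -> rear_offset s g + E g = durations (drop (index g s) s).
Proof.
move=> g_in; rewrite (drop_nth g) ?index_mem // nth_index //.
by rewrite /durations big_cons addrC.
Qed.

Lemma block_ok_suffix s k L : uniq s -> {in s, forall g, 0 < E g} ->
  durations (drop k s) <= L -> block_ok E (Block (drop k s) L (rear_offset s)).
Proof.
move=> uniq_s E_gt0 fits; set T := drop k s in fits *.
have E_gt0T : {in T, forall g, 0 < E g} by move=> g /mem_drop/E_gt0.
have offsetT g : g \in T -> rear_offset s g = rear_offset T g by apply: rear_offset_drop.
split => /=; first exact: drop_uniq.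
- by have := durations_ge0 E_gt0T; lra.
- move=> g g_in; rewrite offsetT //; split; first exact: E_gt0T.
    by apply: durations_ge0 => h /mem_drop/E_gt0T.
  rewrite rear_offsetDE //; apply: le_trans fits.
  by rewrite -[in leRHS](drop0 T); exact: durations_drop_le.
- move=> g h g_in h_in g_neq_h; rewrite !offsetT // !rear_offsetDE //.
  have : index g T != index h T by apply: contra g_neq_h => /eqP/(congr1 (nth g T)); rewrite !nth_index // => ->.
  case: ltngtP => // [lt_gh|lt_hg] _; [right | left]; exact: durations_drop_le.
Qed.

Lemma durations_le_cval s : durations s <= cval E tau s.
Proof. by rewrite /cval le_max lexx orbT. Qed.

Lemma sep_le_cval s g : g \in s -> E g + tau g <= cval E tau s.
Proof.
move=> g_in; rewrite /cval le_max; apply/orP; left.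
elim: s g_in => [|x s IH] //; rewrite inE big_cons le_max => /orP [/eqP ->|/IH ->].
  by rewrite lexx.
by rewrite orbT.
Qed.

(* [Mall g - prev] is the paper's [n_x]: [prev] is the allocation of the
   preceding PGT, starting from 1 as in [Raux]. *)
Fixpoint phases (o : G -> R) (prev : nat) (s : seq G) : seq (block R G) :=
  if s is g :: s' then
    nseq (Mall g - prev) (Block s (cval E tau s) o) ++ phases o (Mall g) s'
  else [::].

Definition class_blocks (s : seq G) : seq (block R G) :=
  phases (rear_offset s) 1 s ++ [:: Block s (durations s) (rear_offset s)].

Lemma In_phases o prev s b : List.In b (phases o prev s) ->
  exists k, b = Block (drop k s) (cval E tau (drop k s)) o.
Proof.
elim: s prev => [|g s IH] prev //= b_in.
case: (List.in_app_or _ _ _ b_in) => [b_nseq|/IH [k ->]].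
  by exists 0%N; elim: (Mall g - prev)%N b_nseq => [|n IHn] //= [|/IHn].
by exists k.+1.
Qed.

Lemma members_class_blocks s b : List.In b (class_blocks s) -> {subset members b <= s}.
Proof.
move=> b_in; case: (List.in_app_or _ _ _ b_in) => [/In_phases [k ->] g /mem_drop|[<-|]] //.
Qed.

Lemma blocks_ok_class_blocks s : uniq s -> {in s, forall g, 0 < E g} ->
  blocks_ok E tau (class_blocks s).
Proof.
move=> uniq_s E_gt0; apply: (blocks_ok_common_offset (o := rear_offset s)).
- move=> b b_in; case: (List.in_app_or _ _ _ b_in) => [/In_phases [k ->]|[<-|//]].
    by split => //; apply: block_ok_suffix => //; apply: durations_le_cval.
  have := block_ok_suffix (k := 0) (L := durations s) uniq_s E_gt0.
  by rewrite drop0 => /(_ (lexx _)).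
- by move=> b /In_phases [k ->] g /= g_in; apply: sep_le_cval.
Qed.

Lemma total_span_phases o prev s :
  total_span (phases o prev s) + durations s = Raux E tau Mall prev s.
Proof.
elim: s prev => [|g s IH] prev /=; first by rewrite /total_span /durations !big_nil addr0.
rewrite -IH /total_span big_cat big_nseq /durations big_cons /=.
have -> n x : iter n (+%R x) 0 = x *+ n :> R by elim: n => //= n ->; rewrite mulrS.
rewrite -mulr_natl; lra.
Qed.

Lemma total_span_class_blocks s : total_span (class_blocks s) = Raux E tau Mall 1 s.
Proof.
by rewrite -(total_span_phases (rear_offset s)) /total_span big_cat big_seq1.
Qed.

Lemma count_phases_notin o prev s g : g \notin s ->
  count (fun b => g \in members b) (phases o prev s) = 0%N.
Proof.
elim: s prev => [|h s IH] prev //; rewrite inE negb_or => /andP [g_neq_h g_notin] /=.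
by rewrite count_cat count_nseq IH //= inE (negbTE g_neq_h) (negbTE g_notin).
Qed.

Lemma count_phases o prev s g : uniq s ->
  sorted (fun a b => (Mall a <= Mall b)%N) s -> {in s, forall x, prev <= Mall x}%N ->
  g \in s -> count (fun b => g \in members b) (phases o prev s) = (Mall g - prev)%N.
Proof.
elim: s prev => [|h s IH] prev //= /andP [h_notin uniq_s] sorted_s prev_le g_in.
rewrite count_cat count_nseq /= g_in mul1n.
have Mall_h_le : {in s, forall x, Mall h <= Mall x}%N.
  apply/allP/(order_path_min (leT := fun a b => (Mall a <= Mall b)%N)) => //.
  by move=> ? ? ?; apply: leq_trans.
have := prev_le h (mem_head _ _); move: g_in; rewrite inE => /orP [/eqP ->|g_in_s] le_h.
  by rewrite count_phases_notin ?addn0.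
rewrite IH //; last exact: path_sorted sorted_s.
by have := Mall_h_le g g_in_s; lia.
Qed.

Lemma count_class_blocks s g : uniq s ->
  sorted (fun a b => (Mall a <= Mall b)%N) s -> {in s, forall x, 0 < Mall x}%N ->
  count (fun b => g \in members b) (class_blocks s) = ((g \in s) * Mall g)%N.
Proof.
move=> uniq_s sorted_s Mall_gt0; rewrite count_cat /= addn0.
have [g_in|g_notin] := boolP (g \in s); last by rewrite count_phases_notin.
by rewrite count_phases // mul1n; have := Mall_gt0 g g_in; lia.
Qed.

End FillingClass.

Lemma In_flatten_map (T : eqType) (U : Type) (f : T -> seq U) (ts : seq T) u :
  List.In u (flatten [seq f t | t <- ts]) -> exists2 t, t \in ts & List.In u (f t).
Proof.
elim: ts => [|t ts IH] //= u_in.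
case: (List.in_app_or _ _ _ u_in) => [|/IH [t' t'_in u_in']]; first by exists t; rewrite ?mem_head.
by exists t'; rewrite // in_cons t'_in orbT.
Qed.

Section FillingClasses.
Variables (R : realType) (G : choiceType) (E tau : G -> R) (Mall : G -> nat).
Variables (I : finType) (Z : I -> {fset G}).
Hypothesis Z_disjoint : forall l l' g, g \in Z l -> g \in Z l' -> l = l'.

Definition by_allocation (Zl : {fset G}) : seq G :=
  sort (fun a b => (Mall a <= Mall b)%N) (enum_fset Zl).

Lemma mem_by_allocation Zl g : (g \in by_allocation Zl) = (g \in Zl).
Proof. exact: mem_sort. Qed.

Lemma by_allocation_uniq Zl : uniq (by_allocation Zl).
Proof. by rewrite sort_uniq fset_uniq. Qed.

Lemma by_allocation_sorted Zl : sorted (fun a b => (Mall a <= Mall b)%N) (by_allocation Zl).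
Proof. by apply: sort_sorted => a b; apply: leq_total. Qed.

Definition filling_blocks : seq (block R G) :=
  flatten [seq class_blocks E tau Mall (by_allocation (Z l)) | l <- index_enum I].

Lemma members_filling_blocks b g :
  List.In b filling_blocks -> g \in members b -> exists l, g \in Z l.
Proof.
move=> b_in; have [l _ /members_class_blocks sub_l] := In_flatten_map b_in.
by move/sub_l; rewrite mem_by_allocation; exists l.
Qed.

Lemma blocks_ok_filling_blocks : (forall l, {in Z l, forall g, 0 < E g}) ->
  blocks_ok E tau filling_blocks.
Proof.
move=> E_gt0; rewrite /filling_blocks; have := index_enum_uniq I.
elim: (index_enum I) => [|l ls IH] //= /andP [l_notin uniq_ls].
apply: blocks_ok_cat; [|exact: IH|].
  by apply: blocks_ok_class_blocks; rewrite ?by_allocation_uniq // => g; rewrite mem_by_allocation => /E_gt0.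
move=> b b' b_in b'_in g g_b g_b'; exfalso.
have [l' l'_in b'_in_l'] := In_flatten_map b'_in.
have g_l := members_class_blocks b_in g_b; have g_l' := members_class_blocks b'_in_l' g_b'.
rewrite !mem_by_allocation in g_l g_l'.
by move: l_notin; rewrite (Z_disjoint g_l g_l') l'_in.
Qed.

Lemma total_span_filling_blocks :
  total_span filling_blocks = \sum_(l : I) Rfun E tau Mall (Z l).
Proof.
rewrite /total_span big_flatten big_map; apply: eq_bigr => l _.
exact: total_span_class_blocks.
Qed.

Lemma count_filling_blocks l0 g : (forall l, {in Z l, forall g, 0 < Mall g}%N) ->
  g \in Z l0 -> count (fun b => g \in members b) filling_blocks = Mall g.
Proof.
move=> Mall_gt0 g_l0; rewrite count_flatten sumnE !big_map (bigD1 l0) //=.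
have count_l l : count (fun b => g \in members b)
    (class_blocks E tau Mall (by_allocation (Z l))) = ((g \in Z l) * Mall g)%N.
  rewrite count_class_blocks ?by_allocation_uniq ?by_allocation_sorted ?mem_by_allocation //.
  by move=> x; rewrite mem_by_allocation => /Mall_gt0.
rewrite count_l g_l0 mul1n big1 ?addn0 // => l l_neq_l0; rewrite count_l.
by case: (boolP (g \in Z l)) => // g_l; rewrite (Z_disjoint g_l g_l0) eqxx in l_neq_l0.
Qed.

End FillingClasses.

Theorem mainTheorem5
  (R : realType) (G : choiceType) (P V : Type)
  (path : G -> P) (xi : P -> V -> Prop)
  (E tau : G -> R) (Mall : G -> nat)
  (* partition of paths into pairwise disjoint cells, indexed by I *)
  (I : Type) (cell : I -> P -> Prop)
  (Hdisj : forall i j, i <> j -> forall p, cell i p -> cell j p -> False)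
  (* filling classes theta_0, ..., theta_{M-1} (ordered by their index) *)
  (M : nat) (Zth : 'I_M -> {fset G}) (cth : 'I_M -> I)
  (Hcth : injective cth)
  (Hfill : forall l g, g \in Zth l -> cell (cth l) (path g))
  (HE : forall l g, g \in Zth l -> 0 < E g)
  (Htau : forall l g, g \in Zth l -> 0 <= tau g)
  (HM : forall l g, g \in Zth l -> (0 < Mall g)%N)
  (t0 : R) :
  exists S : seq (G * R),
    [/\ valid_schedule E tau path xi S,
        (forall a, a \in S -> exists l, a.1 \in Zth l),
        (forall g, (exists l, g \in Zth l) ->
            count (fun a => a.1 == g) S = Mall g) &
        (forall a, a \in S ->
            t0 <= a.2 /\ a.2 + E a.1 <= t0 + \sum_(l < M) Rfun E tau Mall (Zth l))].
Proof.
have Z_disjoint l l' g : g \in Zth l -> g \in Zth l' -> l = l'.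
  move=> g_l g_l'; case: (eqVneq l l') => // l_neq_l'; exfalso.
  apply: Hdisj (Hfill _ _ g_l) (Hfill _ _ g_l') => /Hcth l_eq_l'.
  by rewrite l_eq_l' eqxx in l_neq_l'.
have ok_bs := blocks_ok_filling_blocks tau Mall Z_disjoint HE.
exists (lay t0 (filling_blocks E tau Mall Zth)); split.
- exact: valid_lay.
- move=> a /(mem_lay ok_bs) [b [b_in a_b _ _]].
  exact: members_filling_blocks b_in a_b.
- move=> g [l g_l].
  by rewrite (count_lay t0 g ok_bs) (count_filling_blocks E tau Z_disjoint HM g_l).
- move=> a a_in; split; first exact: lay_start_ge ok_bs a_in.
  have [_ [_ _ _ ends_in]] := mem_lay ok_bs a_in.
  by rewrite -total_span_filling_blocks.
Qed.
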